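(* Fix $k\ge2$ and let $Z^{(1)},\dots,Z^{(k)}$ be independent copies of $Z$. In the $k$-choice model: (1) if $\mathbb{E}\min_{1\le i\le k}Z^{(i)}<\infty$, then $\sup_{n\in\mathbb{N}}|R_n|<\infty$ almost surely; (2) if $\mathbb{E}\min_{1\le i\le k}Z^{(i)}=\infty$, then $\sup_{n\in\mathbb{N}}|R_n|=\infty$ almost surely.
   Context: Let $Z$ be a random variable on $\mathbb{N}=\{1,2,3,\dots\}$. Fix $k\ge2$ and let $(Z^{(1)}_n)_{n\ge1},\dots,(Z^{(k)}_n)_{n\ge1}$ be $k$ independent sequences of i.i.d. random variables, all distributed as $Z$ and mutually independent. The $k$-choice model: define $T_n=\{n\}$ for $n\le0$ and $T_n=\{n\}\cup\bigcup_{i=1}^k T_{n-Z^{(i)}_n}$ for $n\ge1$. Let $\mathcal{L}_n=T_n\cap\{0,-1,-2,\dots\}$ and $R_n=\max\mathcal{L}_n$. *)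

From HB Require Import structures.
From mathcomp Require Import all_boot all_order all_algebra.
From mathcomp Require Import all_classical all_reals all_analysis.
Set Implicit Arguments. Unset Strict Implicit. Unset Printing Implicit Defensive.
Import Order.TTheory GRing.Theory Num.Theory.
Local Open Scope classical_set_scope.
Local Open Scope ring_scope.

(* z i n stands for Z^{(i+1)}_n (i : 'I_k, n >= 1); values are assumed >= 1.  *)

(* T_m computed with fuel; for m = n >= 1 the fuel n suffices because
   each step strictly decreases the index (all z >= 1).  Returns T_m as a
   list of integers (possibly with repetitions). *)
Fixpoint Tfuel (k : nat) (z : 'I_k -> nat -> nat) (fuel : nat) (m : int)
  : seq int :=
  if m <= 0 then [:: m] else
  match fuel with
  | 0%N => [:: m]
  | f.+1 => m :: flatten [seq Tfuel z f (m - (z i `|m|%N)%:Z) | i <- enum 'I_k]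
  end.

Definition Tset (k : nat) (z : 'I_k -> nat -> nat) (n : nat) : seq int :=
  Tfuel z n n%:Z.

Definition Lset (k : nat) (z : 'I_k -> nat -> nat) (n : nat) : seq int :=
  [seq x <- Tset z n | x <= 0].

(* R_n = max L_n (L_n is nonempty when all z >= 1) *)
Definition Rmax (k : nat) (z : 'I_k -> nat -> nat) (n : nat) : int :=
  let s := Lset z n in foldr Num.max (head 0 s) s.

(* minimum of a k-family of naturals (meaningful for k >= 1) *)
Definition kmin (k : nat) (f : 'I_k -> nat) : nat :=
  let s := [seq f i | i <- enum 'I_k] in foldr minn (head 0%N s) s.

(* product rule for every finite subfamily (of indices satisfying [A]) and
   every choice of values; for discrete random variables this is mutual
   independence. *)
Definition mutually_independent_nat {d : measure_display} {T : measurableType d}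
  {R : realType} (P : probability T R) (I : eqType) (A : pred I)
  (X : I -> T -> nat) : Prop :=
  forall (s : seq I) (v : I -> nat), uniq s -> all A s ->
    fine (P (\bigcap_(i in [set` s]) [set w | X i w = v i])) =
    \prod_(i <- s) fine (P [set w | X i w = v i]).

From HB Require Import structures.
From mathcomp Require Import all_boot all_order all_algebra.
From mathcomp Require Import all_classical all_reals all_analysis.
From mathcomp Require Import zify ring lra.

Set Implicit Arguments.
Unset Strict Implicit.
Unset Printing Implicit Defensive.

Import Order.TTheory GRing.Theory Num.Theory.
Local Open Scope classical_set_scope.
Local Open Scope ring_scope.

(* Write W_m := min_i Z^(i)_m.  Following from n the child reached by the
   smallest jump, one enters the nonpositive integers at a point >= -M as soon
   as W_m <= m + M for all m, so |R_n| <= M; conversely, if W_m > m + M then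
   every child of m lies below -M and |R_m| > M.  Hence sup_n |R_n| < oo iff
   W_m - m is bounded above.  The W_m are i.i.d. copies of W := min_i Z^(i)
   (product rule for independent coordinates), and sum_m P(W_m > m + M)
   differs from sum_j P(W > j) = E W by a finite amount.  If E W < oo, the
   Borel-Cantelli lemma gives W_m <= m eventually; if E W = oo, for each M the
   independent events {W_m > m + M} have a divergent sum, so almost surely one
   of them occurs. *)

Lemma foldr_minn_mem (x : nat) s : foldr minn x s \in x :: s.
Proof.
elim: s => [|y s IH] /=; first exact: mem_head.
rewrite /minn; case: ifP => _; first by rewrite !inE eqxx orbT.
by move: IH; rewrite !inE => /orP[->|->]; rewrite ?orbT.
Qed.

Lemma foldr_minn_le (x : nat) s y : y \in x :: s -> (foldr minn x s <= y)%N.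
Proof.
elim: s y => [|z s IH] y /=; first by rewrite inE => /eqP->.
rewrite !inE geq_min => /or3P[/eqP->|/eqP->|ys]; last 2 first.
- by rewrite leqnn.
- by rewrite IH ?orbT // inE ys orbT.
by rewrite IH ?mem_head ?orbT.
Qed.

Lemma kmin_le k (f : 'I_k -> nat) i : (kmin f <= f i)%N.
Proof. by apply: foldr_minn_le; rewrite inE map_f ?orbT ?mem_enum. Qed.

Lemma kmin_attained k (f : 'I_k -> nat) : (0 < k)%N -> exists i, kmin f = f i.
Proof.
move=> k0; rewrite /kmin; set s := [seq f i | i <- enum 'I_k].
have hs : head 0%N s \in s.
  have : f (Ordinal k0) \in s by rewrite map_f ?mem_enum.
  by case: s => // *; exact: mem_head.
have : foldr minn (head 0%N s) s \in s.
  by have := foldr_minn_mem (head 0%N s) s; rewrite inE => /orP[/eqP->|].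
by case/mapP => i _ ->; exists i.
Qed.

Lemma foldr_max_mem (h : int) s : foldr Num.max h s \in h :: s.
Proof.
elim: s => [|y s IH] /=; first exact: mem_head.
case: leP => _; last by rewrite !inE eqxx orbT.
by move: IH; rewrite !inE => /orP[->|->]; rewrite ?orbT.
Qed.

Lemma foldr_max_ge (h : int) s y : y \in h :: s -> y <= foldr Num.max h s.
Proof.
elim: s y => [|z s IH] y /=; first by rewrite inE => /eqP->.
rewrite !inE le_max => /or3P[/eqP->|/eqP->|ys]; last 2 first.
- by rewrite lexx.
- by rewrite IH ?orbT // inE ys orbT.
by rewrite IH ?mem_head ?orbT.
Qed.

Section tree.
Variables (k : nat) (z : 'I_k -> nat -> nat).

Lemma Rmax_ge n x : x \in Lset z n -> x <= Rmax z n.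
Proof. by move=> xL; apply: foldr_max_ge; rewrite inE xL orbT. Qed.

Lemma Rmax_mem n : Lset z n != [::] -> Rmax z n \in Lset z n.
Proof.
rewrite /Rmax; case: (Lset z n) => // x s _.
by have := foldr_max_mem x (x :: s); rewrite inE => /orP[/eqP->|]; rewrite ?mem_head.
Qed.

Lemma Tfuel_le0 f m : m <= 0 -> Tfuel z f m = [:: m].
Proof. by case: f => [|f] /= ->. Qed.

Lemma TfuelS_gt0 f (n : nat) : (0 < n)%N ->
  Tfuel z f.+1 n%:Z = n%:Z :: flatten [seq Tfuel z f (n%:Z - (z i n)%:Z) | i <- enum 'I_k].
Proof. by move=> n0 /=; rewrite lez_nat leqNgt n0. Qed.

Lemma mem_TfuelS_child f (n : nat) (i : 'I_k) x : (0 < n)%N ->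
  x \in Tfuel z f (n%:Z - (z i n)%:Z) -> x \in Tfuel z f.+1 n%:Z.
Proof.
move=> n0 xT; rewrite TfuelS_gt0 // inE; apply/orP; right.
by apply/flatten_mapP; exists i; rewrite ?mem_enum.
Qed.

Hypothesis z_gt0 : forall i m, (0 < m)%N -> (0 < z i m)%N.

(* Follow the smallest jump from n: the first nonpositive point reached comes
   from some 0 < m by a jump of at most m + M, hence lies in [-M, 0]. *)
Lemma Tfuel_mem_window M f (n : nat) : (0 < k)%N ->
  (forall m, (0 < m)%N -> (kmin (fun i => z i m) <= m + M)%N) ->
  (0 < n)%N -> (n <= f)%N ->
  exists2 x, x \in Tfuel z f n%:Z & - (M%:Z) <= x <= 0.
Proof.
move=> k0 zmin; elim: f n => [|f IH] n n0 nf; first by move: nf n0; rewrite leqn0 => /eqP->.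
have [i Ei] := kmin_attained (fun i => z i n) k0.
have zle := zmin n n0; rewrite Ei in zle.
have zp := z_gt0 i n0.
have [hc|hc] := leqP n (z i n).
  exists (n%:Z - (z i n)%:Z); last by apply/andP; split; lia.
  by apply: (mem_TfuelS_child (i := i) n0); rewrite Tfuel_le0 ?mem_head //; lia.
have [||x xin xb] := IH (n - z i n)%N; [lia|lia|].
exists x => //; apply: (mem_TfuelS_child (i := i) n0).
by have -> : n%:Z - (z i n)%:Z = (n - z i n)%N%:Z by lia.
Qed.

Lemma abs_Rmax_le M n : (0 < k)%N ->
  (forall m, (0 < m)%N -> (kmin (fun i => z i m) <= m + M)%N) ->
  (0 < n)%N -> (`|Rmax z n| <= M)%N.
Proof.
move=> k0 zmin n0.
have [x xT /andP[Mx x0]] := Tfuel_mem_window k0 zmin n0 (leqnn n).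
have xL : x \in Lset z n by rewrite mem_filter x0.
have : Rmax z n \in Lset z n by apply: Rmax_mem; apply/eqP => E; rewrite E in xL.
rewrite mem_filter => /andP[R0 _]; have := Rmax_ge xL; lia.
Qed.

Lemma abs_Rmax_gt M m : (0 < k)%N -> (0 < m)%N ->
  (m + M < kmin (fun i => z i m))%N -> (M < `|Rmax z m|)%N.
Proof.
move=> k0 m0 zmin; have zb i : (m + M < z i m)%N := leq_trans zmin (kmin_le _ i).
have TE : Tset z m = m%:Z :: [seq m%:Z - (z i m)%:Z | i <- enum 'I_k].
  rewrite /Tset; case: m m0 zmin zb => // m' _ _ zb; rewrite TfuelS_gt0 //.
  by congr (_ :: _); elim: (enum 'I_k) => //= i s ->; rewrite Tfuel_le0 //; have := zb i; lia.
have LE : Lset z m = [seq m%:Z - (z i m)%:Z | i <- enum 'I_k].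
  rewrite /Lset TE /= ifF; last by apply/negbTE; rewrite -ltNge; lia.
  by apply/all_filterP/allP => _ /mapP[i _ ->]; have := zb i; lia.
have : Lset z m != [::] by rewrite LE; case: (enum 'I_k) (mem_enum 'I_k (Ordinal k0)).
by move/Rmax_mem; rewrite LE => /mapP[i _ ->]; have := zb i; lia.
Qed.

End tree.

Lemma bigcap_mem_seq (J : eqType) U (s : seq J) (F : J -> set U) :
  \bigcap_(j in [set` s]) F j = \big[setI/setT]_(j <- s) F j.
Proof.
elim: s => [|a s IH]; first by rewrite big_nil set_nil bigcap_set0.
rewrite big_cons -IH -bigcap_setU1; congr (\bigcap_(j in _) _).
apply/seteqP; split => j /=; rewrite inE.
  by case/orP => [/eqP->|js]; [left|right].
by case=> [->|js]; rewrite ?eqxx // js orbT.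
Qed.

Section nat_valued.
Context d (T : measurableType d) (X : T -> nat).
Hypothesis mX : forall j, measurable [set w | X w = j].

Lemma preimage_nat_bigcup (B : set nat) :
  X @^-1` B = \bigcup_(j in B) [set w | X w = j].
Proof. by apply/seteqP; split => w /= => [Bw|[j Bj ->]] //; exists (X w). Qed.

Lemma measurable_preimage_nat (B : set nat) : measurable (X @^-1` B).
Proof. by rewrite preimage_nat_bigcup; apply: bigcup_measurable => j _. Qed.

Lemma measure_preimageI_nat (R : realType) (mu : {measure set T -> \bar R})
    (B : set nat) (C : set T) : measurable C ->
  mu (X @^-1` B `&` C) = (\sum_(j <oo | j \in B) mu ([set w | X w = j] `&` C))%E.
Proof.
move=> mC; rewrite -measure_bigcup; last first.
- by move=> i j _ _ [w [[/= Xi _] [/= Xj _]]]; rewrite -Xi -Xj.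
- by move=> j _; exact: measurableI.
by rewrite preimage_nat_bigcup setI_bigcupl.
Qed.

Lemma measure_preimage_nat (R : realType) (mu : {measure set T -> \bar R})
    (B : set nat) :
  mu (X @^-1` B) = (\sum_(j <oo | j \in B) mu [set w | X w = j])%E.
Proof.
rewrite -[X @^-1` B]setIT measure_preimageI_nat //.
by apply: eq_eseriesr => j _; rewrite setIT.
Qed.

End nat_valued.

Lemma fine_measureK d (T : measurableType d) (R : realType) (P : probability T R) E :
  measurable E -> (fine (P E))%:E = P E.
Proof. by move=> mE; rewrite fineK // fin_num_measure. Qed.

Section product_rule.
Context d (T : measurableType d) (R : realType) (P : probability T R).
Context (I : eqType) (A : pred I) (X : I -> T -> nat).
Hypothesis mX : forall a, A a -> forall j, measurable [set w | X a w = j].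
Hypothesis indepX : mutually_independent_nat P A X.

Local Notation Pr E := (fine (P E)).

(* Induction on [s]: countable additivity splits [X a @^-1` B a] into the
   point events [X a = j], which join the pinned coordinates [t]. *)
Lemma indep_pinned_preimages (s t : seq I) (v : I -> nat) (B : I -> set nat) :
  uniq (s ++ t) -> all A (s ++ t) ->
  Pr (\big[setI/setT]_(a <- t) [set w | X a w = v a] `&`
      \big[setI/setT]_(a <- s) X a @^-1` B a) =
  \prod_(a <- t) Pr [set w | X a w = v a] * \prod_(a <- s) Pr (X a @^-1` B a).
Proof.
elim: s t v => [|a s IH] t v.
  by rewrite cat0s !big_nil setIT mulr1 -bigcap_mem_seq; exact: indepX.
rewrite cat_cons cons_uniq mem_cat negb_or /= => /andP[/andP[aNs aNt] ust] /andP[Aa Ast].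
have [As At] : all A s /\ all A t by move: Ast; rewrite all_cat => /andP[].
rewrite !big_cons.
set Pts := \big[setI/setT]_(b <- t) _; set Sets := \big[setI/setT]_(b <- s) _.
pose K := \prod_(b <- t) Pr [set w | X b w = v b] * \prod_(b <- s) Pr (X b @^-1` B b).
have mPts : measurable Pts.
  by rewrite /Pts big_seq; apply: bigsetI_measurable => b /(allP At) /mX.
have mSets : measurable Sets.
  rewrite /Sets big_seq; apply: bigsetI_measurable => b /(allP As) Ab.
  exact: (measurable_preimage_nat (mX Ab)).
have mXa := mX Aa.
have pin j : Pr ([set w | X a w = j] `&` (Pts `&` Sets)) = Pr [set w | X a w = j] * K.
  pose v' b := if b == a then j else v b.
  have v'E : {in t, v' =1 v} by move=> b bt; rewrite /v' ifN //; apply: contraNneq aNt => <-.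
  have := IH (a :: t) v'; rewrite !big_cons /v' eqxx -/(v' _).
  rewrite (eq_big_seq _ (fun b bt => congr1 (fun c => [set w | X b w = c]) (v'E b bt))).
  rewrite (eq_big_seq _ (fun b bt => congr1 (fun c => Pr [set w | X b w = c]) (v'E b bt))).
  rewrite -setIA -mulrA; apply.
    by rewrite -cat1s uniq_catCA /= mem_cat negb_or aNs aNt ust.
  by rewrite all_cat /= Aa As At.
have term j : P ([set w | X a w = j] `&` (Pts `&` Sets)) = (K%:E * P [set w | X a w = j])%E.
  rewrite -(fine_measureK P); last by apply: measurableI => //; exact: measurableI.
  by rewrite pin -(fine_measureK P (mXa j)) -EFinM mulrC.
rewrite setICA (measure_preimageI_nat mXa); last exact: measurableI.
rewrite (eq_eseriesr (fun j _ => term j)) nneseriesZl; last by move=> *; exact: measure_ge0.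
rewrite -(measure_preimage_nat mXa) fineM ?fin_num_measure //; last exact: measurable_preimage_nat.
by rewrite /= /K; ring.
Qed.

Lemma indep_preimages (s : seq I) (B : I -> set nat) : uniq s -> all A s ->
  Pr (\big[setI/setT]_(a <- s) X a @^-1` B a) = \prod_(a <- s) Pr (X a @^-1` B a).
Proof.
move=> us As; have := @indep_pinned_preimages s [::] (fun _ => 0%N) B.
by rewrite cats0 big_nil setTI big_nil mul1r; apply.
Qed.

End product_rule.

Definition independent_events d (T : measurableType d) (R : realType)
    (P : probability T R) (J : eqType) (D : pred J) (G : J -> set T) : Prop :=
  forall t : seq J, uniq t -> all D t ->
    fine (P (\big[setI/setT]_(j <- t) G j)) = \prod_(j <- t) fine (P (G j)).

Section independent_events.
Context d (T : measurableType d) (R : realType) (P : probability T R).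
Context (J : eqType) (D : pred J) (G : J -> set T).
Hypothesis mG : forall j, D j -> measurable (G j).
Hypothesis indepG : independent_events P D G.

Local Notation Pr E := (fine (P E)).

Lemma independent_events_mixed (t u : seq J) : uniq (t ++ u) -> all D (t ++ u) ->
  Pr (\big[setI/setT]_(j <- u) G j `&` \big[setI/setT]_(j <- t) ~` G j) =
  \prod_(j <- u) Pr (G j) * \prod_(j <- t) (1 - Pr (G j)).
Proof.
elim: t u => [|j t IH] u.
  by rewrite !cat0s !big_nil setIT mulr1; exact: indepG.
rewrite cat_cons cons_uniq mem_cat negb_or /= => /andP[/andP[jNt jNu] utu] /andP[Dj Dtu].
have [Dt Du] : all D t /\ all D u by move: Dtu; rewrite all_cat => /andP[].
have mU : measurable (\big[setI/setT]_(i <- u) G i).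
  by rewrite big_seq; apply: bigsetI_measurable => i /(allP Du) /mG.
have mC : measurable (\big[setI/setT]_(i <- t) ~` G i).
  by rewrite big_seq; apply: bigsetI_measurable => i /(allP Dt) /mG /measurableC.
have splitD : \big[setI/setT]_(i <- u) G i `&` \big[setI/setT]_(i <- j :: t) ~` G i =
    (\big[setI/setT]_(i <- u) G i `&` \big[setI/setT]_(i <- t) ~` G i) `\` G j.
  by rewrite big_cons setDE [RHS]setIC setICA.
have withj : (\big[setI/setT]_(i <- u) G i `&` \big[setI/setT]_(i <- t) ~` G i) `&` G j =
    \big[setI/setT]_(i <- j :: u) G i `&` \big[setI/setT]_(i <- t) ~` G i.
  by rewrite big_cons setIAC (setIC _ (G j)).
rewrite splitD measureD //; [|exact: measurableI|exact: mG|]; last first.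
  by rewrite (le_lt_trans (probability_le1 _ _)) ?ltry //; exact: measurableI.
rewrite withj fineB ?fin_num_measure //; last 2 first.
- exact: measurableI.
- by rewrite -withj; apply: measurableI; [exact: measurableI|exact: mG].
rewrite IH // (IH (j :: u)) ?big_cons; first by ring.
  by rewrite -cat1s uniq_catCA /= mem_cat negb_or jNt jNu.
by rewrite all_cat /= Dj Dt Du.
Qed.

Lemma independent_eventsC : independent_events P D (fun j => ~` G j).
Proof.
move=> t ut Dt; have := @independent_events_mixed t [::].
rewrite cats0 big_nil setTI big_nil mul1r => -> //.
apply: eq_big_seq => j /(allP Dt) Dj.
by rewrite probability_setC ?fineB ?fin_num_measure //; exact: mG.
Qed.

End independent_events.

Lemma prodr_1B_mulr_1D_sumr_le1 (R : realDomainType) (I : Type) (s : seq I) (p : I -> R) :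
  (forall i, 0 <= p i <= 1) ->
  \prod_(i <- s) (1 - p i) * (1 + \sum_(i <- s) p i) <= 1.
Proof.
move=> p01; elim: s => [|x s IH]; first by rewrite !big_nil; lra.
rewrite !big_cons.
have h0 : 0 <= \prod_(i <- s) (1 - p i) by apply: prodr_ge0 => i _; have := p01 i; lra.
have h1 : 0 <= \sum_(i <- s) p i by apply: sumr_ge0 => i _; have := p01 i; lra.
have /andP[px0 px1] := p01 x.
have : 0 <= \prod_(i <- s) (1 - p i) * (p x * (p x + \sum_(i <- s) p i)).
  by apply: mulr_ge0 => //; apply: mulr_ge0 => //; lra.
nra.
Qed.

Lemma nneseries_pinfty_unbounded (R : realType) (u : nat -> R) :
  (forall i, 0 <= u i) -> (\sum_(i <oo) (u i)%:E = +oo)%E ->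
  forall K, exists N, K < \sum_(0 <= i < N) u i.
Proof.
move=> u0 uoo K; apply: contrapT => /forallNP bnd.
suff : (\sum_(i <oo) (u i)%:E <= K%:E)%E by rewrite uoo leNgt ltry.
apply: lime_le; first by apply: is_cvg_nneseries => *; rewrite lee_fin.
by apply: nearW => N; rewrite sumEFin lee_fin leNgt; apply/negP; exact: bnd.
Qed.

Section second_borel_cantelli.
Context d (T : measurableType d) (R : realType) (P : probability T R).
Variable F : nat -> set T.
Hypothesis mF : forall j, measurable (F j).
Hypothesis indepF : independent_events P xpredT F.

Local Notation Pr E := (fine (P E)).

Lemma independent_events_bigcapC_eq0 :
  (\sum_(j <oo) P (F j) = +oo)%E -> P (\bigcap_j ~` F j) = 0%E.
Proof.
move=> Foo; set G := \bigcap_j ~` F j.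
have mG : measurable G by apply: bigcapT_measurable => j; exact: measurableC.
have GN N : Pr G * (1 + \sum_(0 <= j < N) Pr (F j)) <= 1.
  have p01 j : 0 <= Pr (F j) <= 1.
    by rewrite fine_ge0 ?measure_ge0 // -lee_fin fine_measureK ?probability_le1.
  apply: le_trans (prodr_1B_mulr_1D_sumr_le1 (index_iota 0 N) p01).
  apply: ler_wpM2r; first by rewrite addr_ge0 ?sumr_ge0 // => j _; rewrite fine_ge0 ?measure_ge0.
  have mC t : measurable (\big[setI/setT]_(j <- t) ~` F j).
    by apply: bigsetI_measurable => j _; exact: measurableC.
  apply: (@le_trans _ _ (Pr (\big[setI/setT]_(j <- index_iota 0 N) ~` F j))).
    apply: fine_le; rewrite ?fin_num_measure //; apply: le_measure; rewrite ?inE //.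
    by move=> w Gw; rewrite -bigcap_mem_seq => j _; exact: Gw.
  rewrite (independent_eventsC (fun j _ => mF j) indepF) ?iota_uniq ?all_predT //.
  rewrite le_eqVlt; apply/orP; left; apply/eqP/eq_bigr => j _.
  by rewrite probability_setC // fineB ?fin_num_measure.
suff G0 : Pr G = 0 by rewrite -(fine_measureK P mG) G0.
apply/eqP; rewrite eq_le fine_ge0 ?measure_ge0 // andbT leNgt; apply/negP => Gpos.
have Fsum : (\sum_(j <oo) (Pr (F j))%:E = +oo)%E.
  by rewrite -Foo; apply: eq_eseriesr => j _; exact: (fine_measureK P (mF j)).
have [N SN] := nneseries_pinfty_unbounded (fun j => fine_ge0 (measure_ge0 P (F j))) Fsum (Pr G)^-1.
have : 1 < Pr G * \sum_(0 <= j < N) Pr (F j) by rewrite -(mulfV (lt0r_neq0 Gpos)) ltr_pM2l.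
have := GN N; rewrite mulrDr mulr1; lra.
Qed.

End second_borel_cantelli.

Lemma nneseries_addn_pinfty (R : realType) (u : nat -> R) n :
  (forall i, 0 <= u i) -> (\sum_(i <oo) (u i)%:E = +oo)%E ->
  (\sum_(i <oo) (u (i + n)%N)%:E = +oo)%E.
Proof.
move=> u0; rewrite (nneseries_addn (f := fun i => (u i)%:E)) => [|i]; last by rewrite lee_fin.
rewrite (@nneseries_split _ _ 0 n) => [|i _]; last by rewrite lee_fin.
by rewrite add0n sumEFin; case: (\sum_(n <= k <oo) _)%E.
Qed.

Lemma integral_nat_tail d (T : measurableType d) (R : realType)
    (mu : {measure set T -> \bar R}) (f : T -> nat) :
  (forall j, measurable [set w | (j < f w)%N]) ->
  (\int[mu]_w ((f w)%:R : R)%:E = \sum_(j <oo) mu [set w | (j < f w)%N])%E.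
Proof.
move=> mlt.
have tail w : ((f w)%:R : R)%:E = (\sum_(j <oo) (\1_[set w | (j < f w)%N] w : R)%:E)%E.
  rewrite (@nneseries_split _ _ 0 (f w)) => [|j _]; last by rewrite lee_fin indicE ler0n.
  rewrite eseries0 ?adde0 => [|j jf _]; last by rewrite indicE memNset //= ltnNge jf.
  rewrite add0n sumEFin -[X in _ = X%:E](eq_big_nat _ _ (F1 := fun _ => 1%R)).
    by rewrite sumr_const_nat subn0.
  by move=> j /andP[_ jf]; rewrite indicE mem_set.
under eq_integral do rewrite tail.
rewrite integral_nneseries // => [|j]; last first.
  by apply/measurable_realfun.measurable_EFinP; exact: measurable_realfun.measurable_indic.
by apply: eq_eseriesr => j _; rewrite integral_indic // setIT.
Qed.

Section k_choice.
Context d (T : measurableType d) (R : realType) (P : probability T R) (k : nat).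
Context (Z : 'I_k -> nat -> T -> nat).
Hypothesis k_gt0 : (0 < k)%N.
Hypothesis mZ : forall i n j, (0 < n)%N -> measurable [set w | Z i n w = j].
Hypothesis Z_same_law : forall i i' n n' j, (0 < n)%N -> (0 < n')%N ->
  P [set w | Z i n w = j] = P [set w | Z i' n' w = j].
Hypothesis indepZ : mutually_independent_nat P (fun p : 'I_k * nat => (0 < p.2)%N)
  (fun p w => Z p.1 p.2 w).

Local Notation Pr E := (fine (P E)).
Local Notation minZ m w := (kmin (fun i => Z i m w)).

Let mZ_cell (a : 'I_k * nat) : (0 < a.2)%N -> forall j, measurable [set w | Z a.1 a.2 w = j].
Proof. by move=> a0 j; exact: mZ. Qed.

Definition block_cells (t : seq nat) : seq ('I_k * nat) :=
  [seq (i, m) | m <- t, i <- enum 'I_k].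

Lemma minZ_gt_block c m :
  [set w | (c < minZ m w)%N] = \big[setI/setT]_(i <- enum 'I_k) [set w | (c < Z i m w)%N].
Proof.
rewrite -bigcap_mem_seq; apply/seteqP; split => w /=.
  by move=> cW i _; exact: leq_trans cW (kmin_le _ i).
by have [i ->] := kmin_attained (fun i => Z i m w) k_gt0; apply; rewrite /= mem_enum.
Qed.

Lemma bigsetI_minZ_gt (c : nat -> nat) t :
  \big[setI/setT]_(m <- t) [set w | (c m < minZ m w)%N] =
  \big[setI/setT]_(a <- block_cells t) (fun w => Z a.1 a.2 w) @^-1` [set x | (c a.2 < x)%N].
Proof. by rewrite big_allpairs_dep; apply: eq_bigr => m _; rewrite minZ_gt_block. Qed.

Lemma prob_bigsetI_minZ_gt (c : nat -> nat) t : uniq t -> all (fun m => 0 < m)%N t ->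
  Pr (\big[setI/setT]_(m <- t) [set w | (c m < minZ m w)%N]) =
  \prod_(m <- t) \prod_(i <- enum 'I_k) Pr [set w | (c m < Z i m w)%N].
Proof.
move=> ut t0; rewrite bigsetI_minZ_gt (indep_preimages mZ_cell indepZ).
- by rewrite big_allpairs_dep.
- by rewrite allpairs_uniq_dep ?enum_uniq // => -[i m] [i' m'] _ _ [-> ->].
- by apply/allP => _ /allpairsPdep[m [i [mt _ ->]]]; exact: (allP t0).
Qed.

Lemma measurable_Z_preimage i m B : (0 < m)%N -> measurable (Z i m @^-1` B).
Proof. by move=> m0; apply: measurable_preimage_nat => j; exact: mZ. Qed.

Lemma measurable_minZ_gt c m : (0 < m)%N -> measurable [set w | (c < minZ m w)%N].
Proof.
move=> m0; rewrite minZ_gt_block; apply: bigsetI_measurable => i _.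
exact: (measurable_Z_preimage _ [set x | (c < x)%N] m0).
Qed.

Lemma Z_preimage_same_law i i' m m' B : (0 < m)%N -> (0 < m')%N ->
  P (Z i m @^-1` B) = P (Z i' m' @^-1` B).
Proof.
move=> m0 m'0; rewrite !measure_preimage_nat => [|j|j]; try exact: mZ.
by apply: eq_eseriesr => j _; exact: Z_same_law.
Qed.

Lemma prob_minZ_gt c m : (0 < m)%N ->
  Pr [set w | (c < minZ m w)%N] = Pr [set w | (c < minZ 1 w)%N].
Proof.
move=> m0; have block m' : (0 < m')%N ->
    Pr [set w | (c < minZ m' w)%N] = \prod_(i <- enum 'I_k) Pr [set w | (c < Z i m' w)%N].
  move=> m'0; have := prob_bigsetI_minZ_gt (fun _ => c) (t := [:: m']).
  by rewrite !big_seq1 /= m'0; apply.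
rewrite !block //; apply: eq_bigr => i _; congr fine.
exact: (Z_preimage_same_law i i [set x | (c < x)%N] m0 (isT : (0 < 1)%N)).
Qed.

Lemma independent_minZ_gt (c : nat -> nat) :
  independent_events P (fun m => 0 < m)%N (fun m => [set w | (c m < minZ m w)%N]).
Proof.
move=> t ut t0; rewrite prob_bigsetI_minZ_gt //; apply: eq_big_seq => m mt.
have := prob_bigsetI_minZ_gt c (t := [:: m]).
by rewrite !big_seq1 => -> //=; rewrite (allP t0).
Qed.

Let integral_minZ :
  (\int[P]_w ((minZ 1 w)%:R : R)%:E = \sum_(j <oo) P [set w | (j < minZ 1 w)%N])%E.
Proof. by apply: integral_nat_tail => j; exact: measurable_minZ_gt. Qed.

Hypothesis Z_gt0 : forall i n w, (0 < n)%N -> (0 < Z i n w)%N.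

Lemma Rmax_bounded_ae : (\int[P]_w ((minZ 1 w)%:R : R)%:E < +oo)%E ->
  {ae P, forall w, exists M : nat,
     forall n, (0 < n)%N -> (`|Rmax (fun i m => Z i m w) n| <= M)%N}.
Proof.
move=> Efin; pose F j := [set w | (j < minZ j.+1 w)%N].
have mF j : measurable (F j) by exact: measurable_minZ_gt.
have PF : (\sum_(j <oo) P (F j) < +oo)%E.
  have PFj j : P (F j) = P [set w | (j < minZ 1 w)%N].
    have mF1 := measurable_minZ_gt j (isT : (0 < 1)%N).
    by rewrite -(fine_measureK P (mF j)) -(fine_measureK P mF1) prob_minZ_gt.
  by rewrite (eq_eseriesr (fun j _ => PFj j)) -integral_minZ.
exists (lim_sup_set F); split => [||w /= notbounded].
- by apply: bigcapT_measurable => n; exact: bigcup_measurable.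
- exact: lim_sup_set_cvg0.
apply: contrapT => notlimsup; apply: notbounded.
have [n Fn] : exists n, forall j, (n <= j)%N -> ~ F j w.
  apply: contrapT => /forallNP noN; apply: notlimsup => m _.
  by apply: contrapT => noF; apply: (noN m) => j mj Fj; apply: noF; exists j.
exists (\max_(m < n.+1) minZ m w) => n' n'0.
apply: abs_Rmax_le => // [i m m0|m m0]; first exact: Z_gt0.
have [mn|nm] := leqP m n.
  have mn1 : (m < n.+1)%N by rewrite ltnS.
  apply: leq_trans (leq_addl m _).
  exact: (leq_bigmax (F := fun i : 'I_n.+1 => minZ i w) (Ordinal mn1)).
have : ~ F m.-1 w by apply: Fn; rewrite -ltnS prednK // (leq_ltn_trans (leq0n n) nm).
rewrite /F prednK ?(leq_ltn_trans (leq0n n) nm) // => /negP; lia.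
Qed.

Lemma Rmax_unbounded_ae : (\int[P]_w ((minZ 1 w)%:R : R)%:E = +oo)%E ->
  {ae P, forall w, forall M : nat,
     exists n, (0 < n)%N /\ (M < `|Rmax (fun i m => Z i m w) n|)%N}.
Proof.
move=> Einf; pose F M j := [set w | (j.+1 + M < minZ j.+1 w)%N].
have mF M j : measurable (F M j) by exact: measurable_minZ_gt.
have tail_oo : (\sum_(j <oo) (Pr [set w | (j < minZ 1 w)%N])%:E = +oo)%E.
  rewrite -Einf integral_minZ; apply: eq_eseriesr => j _.
  exact: (fine_measureK P (measurable_minZ_gt j (isT : (0 < 1)%N))).
have null M : P (\bigcap_j ~` F M j) = 0%E.
  apply: independent_events_bigcapC_eq0 => // [t ut _|].
    have := @independent_minZ_gt (fun m => m + M)%N (map S t).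
    rewrite !big_map => -> //; first by rewrite (map_inj_uniq succn_inj).
    by apply/allP => _ /mapP[j _ ->].
  have := nneseries_addn_pinfty M.+1 (fun j => fine_ge0 (measure_ge0 P _)) tail_oo.
  move=> <-; apply: eq_eseriesr => j _.
  by rewrite -(fine_measureK P (mF M j)) prob_minZ_gt // addnS -addSn.
have negl M : P.-negligible (\bigcap_j ~` F M j).
  apply/negligibleP; last exact: null.
  by apply: bigcapT_measurable => j; exact: measurableC.
apply: negligibleS (negligible_bigcup negl) => w /= bounded.
have [M noM] : exists M, ~ exists n, (0 < n)%N /\ (M < `|Rmax (fun i m => Z i m w) n|)%N.
  by apply: contrapT => /forallNP allM; apply: bounded => M; exact: contrapT (allM M).
exists M => // j _ Fj; apply: noM; exists j.+1; split => //.
exact: abs_Rmax_gt.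
Qed.

End k_choice.

Theorem mainTheorem16 (d : measure_display) (T : measurableType d)
  (R : realType) (P : probability T R) (k : nat)
  (Z : 'I_k -> nat -> T -> nat) :
  (2 <= k)%N ->
  (forall i n w, (0 < n)%N -> (0 < Z i n w)%N) ->
  (forall i n j, (0 < n)%N -> measurable [set w | Z i n w = j]) ->
  (forall i i' n n' j, (0 < n)%N -> (0 < n')%N ->
     P [set w | Z i n w = j] = P [set w | Z i' n' w = j]) ->
  mutually_independent_nat P (fun p : 'I_k * nat => (0 < p.2)%N)
    (fun p w => Z p.1 p.2 w) ->
  ((\int[P]_w ((kmin (fun i => Z i 1%N w))%:R : R)%:E < +oo)%E ->
     {ae P, forall w, exists M : nat,
        forall n, (0 < n)%N -> (`|Rmax (fun i m => Z i m w) n| <= M)%N}) /\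
  ((\int[P]_w ((kmin (fun i => Z i 1%N w))%:R : R)%:E = +oo)%E ->
     {ae P, forall w, forall M : nat,
        exists n, (0 < n)%N /\ (M < `|Rmax (fun i m => Z i m w) n|)%N}).
Proof.
move=> k2 Z_gt0 mZ Z_same_law indepZ.
have k_gt0 : (0 < k)%N by apply: leq_trans k2.
split.
- exact: Rmax_bounded_ae.
- exact: Rmax_unbounded_ae.
Qed.
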